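(* Let $n_1,n_2,n_3$ be integers with $3\le n_1,n_2\le n_3$ and $3\max(n_1,n_2)\le 2n_3\le n_1n_2$. Then the Middle Cone Construction described below can be carried out (in particular, when $n_2$ is odd and $k\le1$, a left column with first coordinate not in $\{1,2,n_1\}$ and second coordinate $1$ exists), and for every set $W$ it produces, in the landmark graph $\mathcal{G}(W)$ every hyperedge of color $3$ has exactly two vertices, and every hyperedge of color $1$ and every hyperedge of color $2$ has at least three vertices.
   Context: $K(\mathbf{n})=K_{n_1}\times K_{n_2}\times K_{n_3}$: vertices are triples $(x_1,x_2,x_3)$, $1\le x_i\le n_i$, adjacent iff they differ in every coordinate. For a vertex set $W$, $W_{i,a}=\{w\in W:w_i=a\}$, and the landmark graph $\mathcal{G}(W)$ is the hypergraph on $W$ whose hyperedges are the nonempty $W_{i,a}$, colored $i$. Multiplicities: write $n_3=qn_1+r$, $0\le r\le n_1-1$. If $r\le n_1-r$, $(\ell_1,\dots,\ell_{n_1})$ is $(q+1,q)$ repeated $r$ times followed by $n_1-2r$ copies of $q$; if $r>n_1-r$, it is $(q+1,q)$ repeated $n_1-r$ times followed by $2r-n_1$ copies of $q+1$. Let $L_i=\sum_{j<i}\ell_j$, so block $i$ consists of columns $c$ with $L_i<c\le L_i+\ell_i$; $s_i=L_i+1$ is the start of block $i$. Middle Cone Construction: $W=W^L\cup W^R$, where $W^L$ (left) and $W^R$ (right) each consist of $n_3$ landmarks indexed by columns $c=1,\dots,n_3$. Left column $c$ in block $i$ is $(i,\,y^L_c,\,c)$; right column $c$ in block $i$ is $(i+1,\,y^R_c,\,c)$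 with $n_1+1$ read as $1$. Even $n_2$, $h=n_2/2$: $y^L_c=((c-1)\bmod h)+1$ and $y^R_c=h+((c-1)\bmod h)+1$. Odd $n_2$, $f=(n_2-1)/2$, $k=\#\{i:\ell_i>f\}$. Choose a set $S$ of ''neutral'' left columns: if $k\ge2$, $S=\{s_i:\ell_i>f\}$; if $k\le1$, $S=\{1\}$. Set $y^L_c=n_2$ for $c\in S$, and fill the remaining left columns, in increasing order of $c$, with the periodic sequence $1,2,\dots,f,1,2,\dots,f,\dots$. Set $y^R_c=n_2$ for $c\in S+1$, and fill the remaining right columns in increasing order with $f+1,\dots,2f,f+1,\dots,2f,\dots$. If $k\le1$, additionally choose one left landmark of the form $(x,1,z)$ with $x\notin\{1,2,n_1\}$ and change its second coordinate to $n_2$ (any such choice is allowed). *)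

(* Everything is 1-indexed as in the paper. *)
From mathcomp Require Import all_boot.
Set Implicit Arguments. Unset Strict Implicit. Unset Printing Implicit Defensive.

Section MiddleCone.
Variables n1 n2 n3 : nat.

Definition q := n3 %/ n1.
Definition r := n3 %% n1.

Definition ell (i : nat) : nat :=
  if r <= n1 - r then
    (if i <= 2 * r then (if odd i then q.+1 else q) else q)
  else
    (if i <= 2 * (n1 - r) then (if odd i then q.+1 else q) else q.+1).

Definition Lsum (i : nat) : nat := \sum_(1 <= j < i) ell j.

Definition start (i : nat) : nat := (Lsum i).+1.

(* block containing column c: number of blocks i in 1..n1 starting at or
   before c (the theorem proves this is the block with L_i < c <= L_i + ell_i) *)
Definition block (c : nat) : nat := count (fun i => start i <= c) (iota 1 n1).

Definition h := n2 %/ 2.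
Definition f := (n2 - 1) %/ 2.
Definition kcount : nat := count (fun i => f < ell i) (iota 1 n1).

Definition inS (c : nat) : bool :=
  if 2 <= kcount then has (fun i => (f < ell i) && (start i == c)) (iota 1 n1)
  else c == 1.

Definition rankL (c : nat) : nat := count (fun c' => ~~ inS c') (iota 1 c).
Definition inS1 (c : nat) : bool := inS c.-1 && (1 < c).
Definition rankR (c : nat) : nat := count (fun c' => ~~ inS1 c') (iota 1 c).

Definition yL (c : nat) : nat :=
  if ~~ odd n2 then ((c - 1) %% h).+1
  else if inS c then n2 else ((rankL c - 1) %% f).+1.

Definition yR (c : nat) : nat :=
  if ~~ odd n2 then h + ((c - 1) %% h).+1
  else if inS1 c then n2 else f + ((rankR c - 1) %% f).+1.

Definition triple := (nat * nat * nat)%type.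

(* the modification in case n2 odd and k <= 1 is encoded by the column z
   of the modified left landmark: mz = Some z *)
Definition leftLm (mz : option nat) (c : nat) : triple :=
  (block c, (if mz == Some c then n2 else yL c), c).

Definition rightLm (c : nat) : triple := ((block c %% n1).+1, yR c, c).

Definition validChoice (z : nat) : Prop :=
  [/\ 1 <= z <= n3, block z \notin [:: 1; 2; n1] & yL z = 1].

Definition validMod (mz : option nat) : Prop :=
  if odd n2 && (kcount <= 1) then exists2 z, mz = Some z & validChoice z
  else mz = None.

Definition Wset (mz : option nat) : seq triple :=
  undup ([seq leftLm mz c | c <- iota 1 n3] ++ [seq rightLm c | c <- iota 1 n3]).

Definition coord (i : nat) (w : triple) : nat :=
  match i with 1 => w.1.1 | 2 => w.1.2 | _ => w.2 end.

Definition dim (i : nat) : nat := match i with 1 => n1 | 2 => n2 | _ => n3 end.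

Definition Wia (mz : option nat) (i a : nat) : seq triple :=
  [seq w <- Wset mz | coord i w == a].

Definition is_vertex (w : triple) : Prop :=
  forall i, 1 <= i <= 3 -> 1 <= coord i w <= dim i.

End MiddleCone.

From Pilot Require Import Defs.
From mathcomp Require Import all_boot zify.
Set Implicit Arguments. Unset Strict Implicit. Unset Printing Implicit Defensive.

(* The landmarks of column [c] are the left one [(block c, yL c, c)] and the right one
   [((block c %% n1).+1, yR c, c)], so a color-3 hyperedge has exactly these two vertices.
   The color-1 hyperedge of block [x] collects the left landmarks of block [x] and the right
   landmarks of the block before it, [ell x + ell (x - 1) >= 3] of them since
   [3 * n1 <= 2 * n3]. In color 2 the second coordinates run periodically through [1..h] and
   [h+1..n2] (even [n2]), resp. through [1..f] on the non-neutral left columns and [f+1..2f] on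
   the right ones (odd [n2]); as [3 * n2 <= 2 * n3], every period is completed at least three
   times. The value [n2] is taken by two neutral left columns and the right neighbour of one of
   them, or, when [k <= 1], by left column [1], right column [2] and the modified landmark. The
   latter may be chosen in column [2 * f + 2], which lies in a block other than [1], [2], [n1]
   and has second coordinate [1]. *)

Lemma iota1S n : iota 1 n.+1 = rcons (iota 1 n) n.+1.
Proof. by rewrite -cats1 -(addn1 n) iotaD add1n addn1. Qed.

Lemma count_iota_downclosed (P : pred nat) n :
  (forall i j, 0 < i <= j -> P j -> P i) ->
  forall i, 0 < i <= n -> P i = (i <= count P (iota 1 n)).
Proof.
move=> downP; elim: n => [|n IHn] i hi; first by lia.
have le_n := count_size P (iota 1 n); rewrite size_iota in le_n.
rewrite iota1S -cats1 count_cat /= addn0.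
case: (boolP (P n.+1)) => [Pn | nPn].
- have -> : count P (iota 1 n) = n.
    rewrite -[RHS](size_iota 1); apply/eqP; rewrite -all_count; apply/allP => j.
    by rewrite mem_iota => hj; apply: (downP j n.+1) => //; lia.
  by rewrite (downP i n.+1) //; lia.
- case: (ltnP i n.+1) => hin; first by rewrite IHn //; lia.
  have -> : i = n.+1 by lia.
  by rewrite (negbTE nPn) addn0 ltnNge le_n.
Qed.

Lemma count_iota_rank (P : pred nat) n rho : 0 < rho <= count P (iota 1 n) ->
  exists c, [/\ 0 < c <= n, P c & count P (iota 1 c) = rho].
Proof.
elim: n => [|n IHn]; first by rewrite /=; lia.
rewrite iota1S -cats1 count_cat /= addn0 => hrho.
case: (leqP rho (count P (iota 1 n))) => hn.
- have [c [hc Pc rank_c]] : exists c, [/\ 0 < c <= n, P c & count P (iota 1 c) = rho]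
    by apply: IHn; lia.
  by exists c; split => //; lia.
- case Pn: (P n.+1) hrho => /= hrho; last by lia.
  by exists n.+1; rewrite iota1S -cats1 count_cat /= Pn; split => //; lia.
Qed.

Lemma count_iota_rank_progression (P : pred nat) n F y m : 0 < F -> 0 < y ->
  y + m.-1 * F <= count P (iota 1 n) ->
  exists s, [/\ uniq s, size s = m & {in s, forall c, [/\ 0 < c <= n, P c &
    exists2 k, k < m & count P (iota 1 c) = y + k * F]}].
Proof.
move=> F_gt0 y_gt0; elim: m => [|m IHm] hm; first by exists [::].
have [s [uniq_s size_s in_s]] := IHm (ltac:(lia)).
have [c [hc Pc rank_c]] := @count_iota_rank P n (y + m * F) (ltac:(lia)).
have c_notin_s : c \notin s.
  apply/negP => /in_s [_ _ [k k_lt]]; rewrite rank_c => /eqP.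
  by rewrite eqn_add2l eqn_mul2r; lia.
exists (c :: s); split => /=; [by rewrite c_notin_s | by rewrite size_s |].
move=> c'; rewrite inE => /predU1P [-> | /in_s [hc' Pc' [k k_lt rank_c']]].
- by split => //; exists m.
- by split => //; exists k => //; lia.
Qed.

Lemma count_has_eq_le (T U : eqType) (P : pred T) (g : T -> U) (s : seq T) (t : seq U) :
  uniq t -> count (fun u => has (fun i => P i && (g i == u)) s) t <= count P s.
Proof.
move=> uniq_t; elim: s => [|i s IHs] /=; first by rewrite count_pred0.
have hit_i : count (fun u => P i && (g i == u)) t <= P i.
  case: (P i) => /=; last by rewrite count_pred0.
  rewrite (eq_count (a2 := pred1 (g i))); last by move=> u; rewrite /= eq_sym.
  by rewrite count_uniq_mem //; case: (_ \in _).
apply: leq_trans (leq_add hit_i IHs); rewrite -count_predUI; exact: leq_addr.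
Qed.

Lemma two_le_count_exists (T : eqType) (P : pred T) s : uniq s -> 2 <= count P s ->
  exists i j, [/\ i \in s, j \in s, i != j, P i & P j].
Proof.
move=> uniq_s; rewrite -size_filter.
have mem_Ps x : x \in filter P s -> P x /\ x \in s by rewrite mem_filter => /andP.
case E: (filter P s) (filter_uniq P uniq_s) mem_Ps => [|i [|j t]] //= /andP [i_notin _] mem_Ps _.
have [Pi si] := mem_Ps i (mem_head _ _).
have [Pj sj] : P j /\ j \in s by apply: mem_Ps; rewrite inE mem_head orbT.
by exists i, j; split => //; apply: contraNneq i_notin => ->; apply: mem_head.
Qed.

Section Blocks.
Variables n1 n3 : nat.

Local Notation q := (Defs.q n1 n3).
Local Notation r := (Defs.r n1 n3).
Local Notation ell := (Defs.ell n1 n3).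
Local Notation Lsum := (Defs.Lsum n1 n3).
Local Notation block := (Defs.block n1 n3).

Lemma ell_bounds i : q <= ell i <= q.+1.
Proof. by rewrite /Defs.ell; repeat case: ifP => ?; lia. Qed.

Lemma Lsum_small i : i <= 1 -> Lsum i = 0.
Proof. by move=> le_i1; rewrite /Defs.Lsum big_geq. Qed.

Lemma LsumS i : 0 < i -> Lsum i.+1 = Lsum i + ell i.
Proof. by move=> i_gt0; rewrite /Defs.Lsum big_nat_recr. Qed.

Lemma Lsum_mono i j : i <= j -> Lsum i <= Lsum j.
Proof.
elim: j => [|j IHj]; first by rewrite leqn0 => /eqP ->.
rewrite leq_eqVlt => /predU1P [-> // | /IHj le_ij].
case: j le_ij {IHj} => [|j] le_ij.
  by move: le_ij; rewrite (@Lsum_small 0) // (@Lsum_small 1).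
by rewrite LsumS //; lia.
Qed.

Lemma Lsum_count_gt F m : (forall i, F <= ell i) ->
  m * F + count (fun i => F < ell i) (iota 1 m) <= Lsum m.+1.
Proof.
move=> F_le; elim: m => [|m IHm]; first by rewrite Lsum_small.
rewrite LsumS // iota1S -cats1 count_cat /= addn0 mulSn.
by have := F_le m.+1; case: ltnP => /=; lia.
Qed.

Lemma block_le c : block c <= n1.
Proof. by rewrite -[leqRHS](size_iota 1) count_size. Qed.

Lemma Lsum_lt_block c i : 0 < i <= n1 -> (Lsum i < c) = (i <= block c).
Proof.
apply: (count_iota_downclosed (P := fun i => Lsum i < c)) => {}i j le_ij lt_jc.
by apply: leq_ltn_trans lt_jc; apply: Lsum_mono; lia.
Qed.

Lemma block_eq x c : 0 < x <= n1 -> Lsum x < c <= Lsum x + ell x -> block c = x.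
Proof.
move=> hx /andP [lt_c le_c]; apply/eqP; rewrite eqn_leq -Lsum_lt_block // lt_c andbT.
case: (ltnP x n1) => [x_lt | x_ge]; last by have := block_le c; lia.
by rewrite leqNgt -Lsum_lt_block ?LsumS -?leqNgt //; lia.
Qed.

Definition prev_block x := if x == 1 then n1 else x.-1.

Lemma prev_block_range x : 0 < x <= n1 -> 0 < prev_block x <= n1.
Proof. by rewrite /prev_block; case: (x =P 1); lia. Qed.

Lemma prev_blockK x : 0 < x <= n1 -> (prev_block x %% n1).+1 = x.
Proof.
rewrite /prev_block; case: (x =P 1) => [-> | x_neq1] hx; first by rewrite modnn.
by rewrite modn_small; lia.
Qed.

Hypotheses (n1_gt0 : 0 < n1) (n1_le_n3 : n1 <= n3).

Lemma q_gt0 : 0 < q.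
Proof. by rewrite divn_gt0. Qed.

Lemma r_lt_n1 : r < n1.
Proof. exact: ltn_pmod. Qed.

Lemma Lsum_total : Lsum n1.+1 = n3.
Proof.
(* the first [2 * minn r (n1 - r)] multiplicities alternate [q.+1, q] *)
have LsumE i : Lsum i.+1 = i * q +
    (if i <= 2 * minn r (n1 - r) then (i + 1) %/ 2
     else minn r (n1 - r) + (if r <= n1 - r then 0 else i - 2 * minn r (n1 - r))).
  elim: i => [|i IHi]; first by rewrite Lsum_small.
  have := r_lt_n1; rewrite LsumS // IHi /Defs.ell.
  by repeat case: ifP => ?; lia.
have := divn_eq n3 n1; have := r_lt_n1; rewrite LsumE /Defs.q /Defs.r.
set Q := n3 %/ n1; set R := n3 %% n1.
by repeat case: ifP => ?; lia.
Qed.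

Lemma block_spec c : 0 < c <= n3 ->
  0 < block c <= n1 /\ Lsum (block c) < c <= Lsum (block c) + ell (block c).
Proof.
move=> hc; have b_le := block_le c; set b := block c in b_le *.
have b_gt0 : 0 < b by rewrite -Lsum_lt_block ?Lsum_small //; lia.
split; first by lia.
apply/andP; split; first by rewrite Lsum_lt_block //; lia.
rewrite -LsumS //.
case: (ltnP b n1) => [b_lt | b_ge].
- by rewrite leqNgt Lsum_lt_block ?ltnn //; lia.
- have -> : b = n1 by lia.
  by rewrite Lsum_total; case/andP: hc.
Qed.

Lemma mem_iota_block x c : 0 < x <= n1 -> c \in iota (Lsum x).+1 (ell x) ->
  block c = x /\ 0 < c <= n3.
Proof.
rewrite mem_iota => hx hc; split; first by apply: block_eq => //; lia.
have := @Lsum_mono x.+1 n1.+1; rewrite Lsum_total LsumS; lia.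
Qed.

(* If [q = 1], the hypothesis forces [n1 <= 2 * r], so that every odd block has [ell = 2];
   of [x] and its predecessor one is odd. *)
Lemma ell_prev_block x : 3 * n1 <= 2 * n3 -> 0 < x <= n1 ->
  3 <= ell x + ell (prev_block x).
Proof.
move=> three_n1 hx; have := ell_bounds x; have := ell_bounds (prev_block x).
case: (ltnP 1 q) => [q_gt1 | q_le1]; first by lia.
have q1 : q = 1 by have := q_gt0; lia.
have r_big : n1 <= 2 * r.
  by have := divn_eq n3 n1; rewrite -/(Defs.q n1 n3) -/(Defs.r n1 n3) q1 mul1n; lia.
have ell_odd y : odd y -> y <= n1 -> ell y = q.+1.
  by have := r_lt_n1; move=> *; rewrite /Defs.ell; repeat case: ifP => ?; lia.
rewrite /prev_block; case: (x =P 1) => [x1 | x_neq1]; first by rewrite x1 (ell_odd 1) //; lia.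
case x_odd: (odd x); first by rewrite (ell_odd x x_odd); lia.
have odd_pred : odd x.-1 by case: x hx x_odd {x_neq1} => // x' _ /= /negbFE.
by rewrite (ell_odd x.-1 odd_pred); lia.
Qed.

End Blocks.

Section Landmarks.
Variables (n1 n2 n3 : nat) (mz : option nat).
Hypotheses (n1_ge3 : 3 <= n1) (n2_ge3 : 3 <= n2) (n1_le_n3 : n1 <= n3).
Hypothesis mz_valid : validMod n1 n2 n3 mz.

Let n1_gt0 : 0 < n1 := ltnW (ltnW n1_ge3).

Local Notation ell := (Defs.ell n1 n3).
Local Notation Lsum := (Defs.Lsum n1 n3).
Local Notation block := (Defs.block n1 n3).
Local Notation prev_block := (prev_block n1).
Local Notation h := (Defs.h n2).
Local Notation f := (Defs.f n2).
Local Notation q := (Defs.q n1 n3).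
Local Notation r := (Defs.r n1 n3).
Local Notation start := (Defs.start n1 n3).
Local Notation kcount := (Defs.kcount n1 n2 n3).
Local Notation inS := (Defs.inS n1 n2 n3).
Local Notation inS1 := (Defs.inS1 n1 n2 n3).
Local Notation rankL := (Defs.rankL n1 n2 n3).
Local Notation rankR := (Defs.rankR n1 n2 n3).
Local Notation yL := (Defs.yL n1 n2 n3).
Local Notation yR := (Defs.yR n1 n2 n3).
Local Notation leftLm := (Defs.leftLm n1 n2 n3 mz).
Local Notation rightLm := (Defs.rightLm n1 n2 n3).
Local Notation Wset := (Defs.Wset n1 n2 n3 mz).
Local Notation Wia := (Defs.Wia n1 n2 n3 mz).

Lemma yL_range c : 0 < yL c <= n2.
Proof. by rewrite /Defs.yL /Defs.h /Defs.f; repeat case: ifP => ?; lia. Qed.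

Lemma yR_range c : 0 < yR c <= n2.
Proof. by rewrite /Defs.yR /Defs.h /Defs.f; repeat case: ifP => ?; lia. Qed.

Lemma Wset_memP w : w \in Wset ->
  exists2 c, 0 < c <= n3 & w = leftLm c \/ w = rightLm c.
Proof.
rewrite mem_undup mem_cat => /orP [] /mapP [c]; rewrite mem_iota => hc ->;
  exists c; by [lia | left | right].
Qed.

Lemma leftLm_Wset c : 0 < c <= n3 -> leftLm c \in Wset.
Proof.
by move=> hc; rewrite mem_undup mem_cat; apply/orP; left; apply: map_f; rewrite mem_iota; lia.
Qed.

Lemma rightLm_Wset c : 0 < c <= n3 -> rightLm c \in Wset.
Proof.
by move=> hc; rewrite mem_undup mem_cat; apply/orP; right; apply: map_f; rewrite mem_iota; lia.
Qed.

Lemma leftLm_inj : injective leftLm.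
Proof. by move=> c c' /(congr1 snd). Qed.

Lemma rightLm_inj : injective rightLm.
Proof. by move=> c c' /(congr1 snd). Qed.

Lemma leftLm_neq_rightLm c c' : 0 < c <= n3 -> leftLm c != rightLm c'.
Proof.
move=> hc; apply/eqP => /(congr1 (fun w => (w.1.1, w.2))) /= [eq_block eq_c]; subst c'.
have [b_range _] := block_spec n1_gt0 n1_le_n3 hc.
move: eq_block; case: (ltnP (block c) n1) => [b_lt | b_ge].
- by rewrite modn_small //; lia.
- have -> : block c = n1 by lia.
  by rewrite modnn; lia.
Qed.

Lemma Wia_witness i a : Wia i a != [::] ->
  exists2 c, 0 < c <= n3 & coord i (leftLm c) = a \/ coord i (rightLm c) = a.
Proof.
case E: (Wia i a) => [|w ws] // _.
have : w \in Wia i a by rewrite E mem_head.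
rewrite mem_filter => /andP [/eqP <- /Wset_memP [c hc [] ->]];
  exists c => //; by [left | right].
Qed.

Lemma Wset_vertex w : w \in Wset -> is_vertex n1 n2 n3 w.
Proof.
move=> /Wset_memP [c hc w_c] i hi.
have [b_range _] := block_spec n1_gt0 n1_le_n3 hc.
have := ltn_pmod (block c) n1_gt0; have := yL_range c; have := yR_range c.
have : i = 1 \/ i = 2 \/ i = 3 by lia.
by case=> [|[|]] ->; case: w_c => -> /=; try case: ifP; lia.
Qed.

Lemma Wia3_mem a : 0 < a <= n3 -> Wia 3 a =i [:: leftLm a; rightLm a].
Proof.
move=> ha w; rewrite mem_filter !inE; apply/andP/idP => [[/eqP <-] | ].
- by case/Wset_memP => c _ [] -> /=; rewrite eqxx ?orbT.
- by case/orP => /eqP -> /=; rewrite eqxx ?leftLm_Wset ?rightLm_Wset.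
Qed.

Lemma size_Wia3 a : Wia 3 a != [::] -> size (Wia 3 a) = 2.
Proof.
case/Wia_witness => c hc /= [] <-; rewrite (perm_size (uniq_perm _ _ (Wia3_mem hc))) //;
  by rewrite ?filter_uniq ?undup_uniq //= inE leftLm_neq_rightLm.
Qed.

Lemma size_Wia1_ge_ell x : 0 < x <= n1 -> ell x + ell (prev_block x) <= size (Wia 1 x).
Proof.
move=> hx; have hp := prev_block_range hx; have p_succ := prev_blockK hx.
set p := prev_block x in hp p_succ *.
set s := map leftLm (iota (Lsum x).+1 (ell x)) ++ map rightLm (iota (Lsum p).+1 (ell p)).
have -> : ell x + ell p = size s by rewrite size_cat !size_map !size_iota.
apply: uniq_leq_size.
- rewrite cat_uniq !map_inj_uniq ?iota_uniq ?andbT //=; [| exact: rightLm_inj | exact: leftLm_inj].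
  apply/hasPn => _ /mapP [c _ ->]; apply/mapP => -[c' /(mem_iota_block n1_gt0 n1_le_n3 hx)].
  by case=> _ hc' /eqP; rewrite eq_sym (negbTE (leftLm_neq_rightLm c hc')).
- move=> w; rewrite mem_cat mem_filter => /orP [] /mapP [c hc ->] /=.
  + have [-> hc'] := mem_iota_block n1_gt0 n1_le_n3 hx hc.
    by rewrite eqxx leftLm_Wset.
  + have [-> hc'] := mem_iota_block n1_gt0 n1_le_n3 hp hc.
    by rewrite p_succ eqxx rightLm_Wset.
Qed.

Lemma size_Wia1 x : 3 * n1 <= 2 * n3 -> Wia 1 x != [::] -> 3 <= size (Wia 1 x).
Proof.
move=> three_n1 /Wia_witness [c hc /= x_c].
have hx : 0 < x <= n1.
  have [b_range _] := block_spec n1_gt0 n1_le_n3 hc.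
  by have := ltn_pmod (block c) n1_gt0; case: x_c => <-; lia.
exact: leq_trans (ell_prev_block n1_gt0 n1_le_n3 three_n1 hx) (size_Wia1_ge_ell hx).
Qed.

Lemma size_Wia2_ge_left y s :
  uniq s -> {in s, forall c, [/\ 0 < c <= n3, mz != Some c & yL c = y]} ->
  size s <= size (Wia 2 y).
Proof.
move=> uniq_s s_y; rewrite -(size_map leftLm); apply: uniq_leq_size.
  by rewrite map_inj_uniq //; exact: leftLm_inj.
move=> _ /mapP [c /s_y [hc mz_c <-] ->].
by rewrite mem_filter /= (negbTE mz_c) /= eqxx leftLm_Wset.
Qed.

Lemma size_Wia2_ge_right y s : uniq s -> {in s, forall c, 0 < c <= n3 /\ yR c = y} ->
  size s <= size (Wia 2 y).
Proof.
move=> uniq_s s_y; rewrite -(size_map rightLm); apply: uniq_leq_size.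
  by rewrite map_inj_uniq //; exact: rightLm_inj.
by move=> _ /mapP [c /s_y [hc <-] ->]; rewrite mem_filter eqxx rightLm_Wset.
Qed.

Lemma size_Wia2_even y : ~~ odd n2 -> 3 * n2 <= 2 * n3 ->
  Wia 2 y != [::] -> 3 <= size (Wia 2 y).
Proof.
move=> n2_even three_n2; have mz_None : mz = None.
  by move: mz_valid; rewrite /validMod (negbTE n2_even).
have h_gt0 : 0 < h by rewrite /Defs.h; lia.
have three_h : 3 * h <= n3 by rewrite /Defs.h; lia.
(* the columns congruent to [c] modulo [h] share its second coordinate *)
pose cols c := [seq ((c - 1) %% h).+1 + k * h | k <- iota 0 3].
have uniq_cols c : uniq (cols c).
  rewrite map_inj_uniq ?iota_uniq // => k k' /addnI /eqP.
  by rewrite eqn_mul2r gtn_eqF //= => /eqP.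
have mem_cols c c' : c' \in cols c -> 0 < c' <= n3 /\ (c' - 1) %% h = (c - 1) %% h.
  case/mapP => k; rewrite mem_iota => hk ->; have := ltn_pmod (c - 1) h_gt0.
  have -> : ((c - 1) %% h).+1 + k * h - 1 = k * h + (c - 1) %% h by lia.
  by rewrite modnMDl modn_mod; split => //; nia.
case/Wia_witness => c hc y_c.
rewrite /= mz_None /Defs.yL /Defs.yR (negbTE n2_even) /= in y_c.
case: y_c => <-; rewrite -(size_iota 0 3) -(size_map (fun k => ((c - 1) %% h).+1 + k * h)).
- apply: (size_Wia2_ge_left (uniq_cols c)) => c' /(mem_cols c) [hc' eq_c'].
  by split; rewrite ?mz_None // /Defs.yL (negbTE n2_even) eq_c'.
- apply: (size_Wia2_ge_right (uniq_cols c)) => c' /(mem_cols c) [hc' eq_c']; split => //.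
  by rewrite /Defs.yR (negbTE n2_even) eq_c'.
Qed.

Lemma inS_small c : kcount <= 1 -> inS c = (c == 1).
Proof. by rewrite /Defs.inS leqNgt => /negbTE ->. Qed.

Lemma inS_big c : 2 <= kcount ->
  inS c = has (fun i => (f < ell i) && (start i == c)) (iota 1 n1).
Proof. by rewrite /Defs.inS => ->. Qed.

Lemma count_inS_le : count inS (iota 1 n3) <= maxn 1 kcount.
Proof.
rewrite /Defs.inS; case: (leqP 2 kcount) => [k_ge2 | _] /=.
- by apply: leq_trans (count_has_eq_le _ _ _ (iota_uniq 1 n3)) (leq_maxr _ _).
- apply: leq_trans (leq_maxl 1 kcount).
  by rewrite -[X in X <= _]/(count_mem 1 (iota 1 n3)) count_uniq_mem ?iota_uniq ?leq_b1.
Qed.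

Lemma count_inS1_le m : count inS1 (iota 1 m) <= count inS (iota 1 m).
Proof.
case: m => [|m] //.
have -> : count inS1 (iota 1 m.+1) = count inS (iota 1 m).
  rewrite /= {1}/Defs.inS1 /= andbF add0n -[2]add1n iotaDl count_map.
  apply: eq_in_count => c; rewrite mem_iota => /andP [c_gt0 _].
  by rewrite /= /Defs.inS1 add1n /= ltnS c_gt0 andbT.
by rewrite iota1S -cats1 count_cat leq_addr.
Qed.

Lemma start_neutral x : 2 <= kcount -> 0 < x <= n1 -> f < ell x ->
  [/\ block (start x) = x, 0 < start x < n3, inS (start x) & inS1 (start x).+1].
Proof.
move=> k_ge2 hx fx; have f_pos : 0 < f by rewrite /Defs.f; lia.
have in_block k : k < 2 -> (start x + k) \in iota (Lsum x).+1 (ell x).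
  by rewrite /Defs.start mem_iota; lia.
have [bx _] := mem_iota_block n1_gt0 n1_le_n3 hx (in_block 0 isT).
have [_ hx1] := mem_iota_block n1_gt0 n1_le_n3 hx (in_block 1 isT).
have Sx : inS (start x).
  by rewrite inS_big //; apply/hasP; exists x; rewrite ?mem_iota ?fx ?eqxx //; lia.
by rewrite addn0 addn1 in bx hx1; split; rewrite // /Defs.inS1 /= Sx.
Qed.

Section OddN2.
Hypotheses (n2_odd : odd n2) (three_n2 : 3 * n2 <= 2 * n3).

Lemma n2_oddE : n2 = 2 * f + 1.
Proof. by move: n2_odd; rewrite /Defs.f; lia. Qed.

Lemma f_gt0 : 0 < f.
Proof. by have := n2_oddE; lia. Qed.

Lemma yL_neutral c : inS c -> yL c = n2.
Proof. by rewrite /Defs.yL n2_odd => ->. Qed.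

Lemma yR_neutral c : inS1 c -> yR c = n2.
Proof. by rewrite /Defs.yR n2_odd => ->. Qed.

Lemma yL_odd_range c : yL c = n2 \/ 0 < yL c <= f.
Proof.
rewrite /Defs.yL n2_odd /=; case: ifP => _; [by left | right].
by have := ltn_pmod (rankL c - 1) f_gt0; lia.
Qed.

Lemma yR_odd_range c : yR c = n2 \/ f < yR c <= 2 * f.
Proof.
rewrite /Defs.yR n2_odd /=; case: ifP => _; [by left | right].
by have := ltn_pmod (rankR c - 1) f_gt0; lia.
Qed.

Lemma kcount_le : f <= q -> n1 * f + kcount <= n3.
Proof.
move=> f_le_q; have := @Lsum_count_gt n1 n3 f n1; rewrite Lsum_total //.
by apply=> i; have := ell_bounds n1 n3 i; lia.
Qed.

Lemma count_nonneutral_left : 3 * f + (kcount <= 1) <= count (predC inS) (iota 1 n3).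
Proof.
have := count_predC inS (iota 1 n3); have := count_inS_le; rewrite size_iota.
have := n2_oddE; case: (leqP kcount 1) => [k_le1 | k_gt1] /=; first by lia.
have f_le_q : f <= q.
  have /hasP [i _] : has (fun i => f < ell i) (iota 1 n1) by rewrite has_count; exact: ltnW k_gt1.
  by have := ell_bounds n1 n3 i; lia.
have := kcount_le f_le_q; have : 3 * f <= n1 * f by rewrite leq_mul2r n1_ge3 orbT.
lia.
Qed.

Lemma count_nonneutral_right : 3 * f <= count (predC inS1) (iota 1 n3).
Proof.
have := count_nonneutral_left; have := count_inS1_le n3.
have := count_predC inS (iota 1 n3); have := count_predC inS1 (iota 1 n3); lia.
Qed.

Lemma yL_progression y m : 0 < y <= f -> y + m.-1 * f <= count (predC inS) (iota 1 n3) ->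
  exists s, [/\ uniq s, size s = m & {in s, forall c, 0 < c <= n3 /\ yL c = y}].
Proof.
case/andP => y_gt0 y_le_f /(count_iota_rank_progression f_gt0 y_gt0) [s [uniq_s size_s in_s]].
exists s; split => // c /in_s [hc nS [k _ rank_c]]; split => //.
rewrite /Defs.yL n2_odd /= (negbTE nS) (_ : rankL c = y + k * f) //.
have -> : y + k * f - 1 = k * f + (y - 1) by lia.
by rewrite modnMDl modn_small; lia.
Qed.

Lemma yR_progression y m : f < y <= 2 * f ->
  y - f + m.-1 * f <= count (predC inS1) (iota 1 n3) ->
  exists s, [/\ uniq s, size s = m & {in s, forall c, 0 < c <= n3 /\ yR c = y}].
Proof.
case/andP => f_lt_y y_le_2f.
have /(count_iota_rank_progression f_gt0) : 0 < y - f by lia.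
move=> /[apply] [[s [uniq_s size_s in_s]]].
exists s; split => // c /in_s [hc nS1 [k _ rank_c]]; split => //.
rewrite /Defs.yR n2_odd /= (negbTE nS1) (_ : rankR c = y - f + k * f) //.
have -> : y - f + k * f - 1 = k * f + (y - f - 1) by lia.
by rewrite modnMDl modn_small; lia.
Qed.

Lemma size_Wia2_odd_low y : 0 < y <= f -> 3 <= size (Wia 2 y).
Proof.
move=> hy; have := count_nonneutral_left.
move: mz_valid; rewrite /validMod n2_odd /=.
case: (leqP kcount 1) => [k_le1 [z mz_z [_ _ yLz]] | _ mz_None] /= count_ge.
- (* the moved landmark has [yL z = 1]: a fourth column is needed only when [y = 1] *)
  have le_count : y + (3 + (y == 1)).-1 * f <= count (predC inS) (iota 1 n3).
    by case: (y =P 1) => [-> | _] /=; lia.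
  have [s [uniq_s size_s in_s]] := yL_progression hy le_count.
  have z_count : count_mem z s <= (y == 1).
    rewrite count_uniq_mem //; case: (boolP (z \in s)) => // /in_s [_ yLz'].
    by rewrite -yLz' yLz.
  apply: leq_trans (size_Wia2_ge_left (s := filter (predC (pred1 z)) s) (filter_uniq _ uniq_s) _).
  + by have := count_predC (pred1 z) s; rewrite size_filter; lia.
  + move=> c; rewrite mem_filter /= => /andP [c_neq_z /in_s [hc yLc]]; split => //.
    by rewrite mz_z; apply: contra c_neq_z => /eqP [->].
- have [s [uniq_s <- in_s]] := @yL_progression y 3 hy (ltac:(lia)).
  by apply: size_Wia2_ge_left => // c /in_s [hc yLc]; rewrite mz_None.
Qed.

Lemma size_Wia2_odd_high y : f < y <= 2 * f -> 3 <= size (Wia 2 y).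
Proof.
move=> hy; have := count_nonneutral_right => count_ge.
have [s [uniq_s <- in_s]] := @yR_progression y 3 hy (ltac:(lia)).
exact: size_Wia2_ge_right.
Qed.

Lemma size_Wia2_odd_top : 3 <= size (Wia 2 n2).
Proof.
move: mz_valid; rewrite /validMod n2_odd /=.
case: (leqP kcount 1) => [k_le1 [z mz_z [hz _ yLz]] | k_gt1 mz_None].
- have z_neq1 : z != 1.
    by apply/eqP => z1; move: yLz; rewrite z1 yL_neutral ?inS_small //; lia.
  have -> : 3 = size [:: leftLm 1; leftLm z; rightLm 2] by [].
  apply: uniq_leq_size.
    rewrite /= !inE (inj_eq leftLm_inj) [1 == z]eq_sym (negbTE z_neq1) /=.
    by rewrite !leftLm_neq_rightLm //; lia.
  move=> w; rewrite !inE => /or3P [] /eqP ->;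
    rewrite mem_filter ?leftLm_Wset ?rightLm_Wset ?andbT /=; try lia.
  + have yL1 : yL 1 = n2 by rewrite yL_neutral ?inS_small.
    by case: (mz =P Some 1) => _; rewrite ?yL1 eqxx.
  + by rewrite mz_z eqxx.
  + by rewrite yR_neutral // /Defs.inS1 inS_small.
- have [i [j [hi hj i_neq_j Pi Pj]]] := two_le_count_exists (iota_uniq 1 n1) k_gt1.
  rewrite !mem_iota in hi hj.
  have [bi hi_range Si S1i] := start_neutral k_gt1 (ltac:(lia) : 0 < i <= n1) Pi.
  have [bj hj_range Sj _] := start_neutral k_gt1 (ltac:(lia) : 0 < j <= n1) Pj.
  have -> : 3 = size [:: leftLm (start i); leftLm (start j); rightLm (start i).+1] by [].
  apply: uniq_leq_size.
    have s_neq : start i != start j.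
      by apply: contra i_neq_j => /eqP eq_s; rewrite -bi -bj eq_s eqxx.
    by rewrite /= !inE (inj_eq leftLm_inj) (negbTE s_neq) /= !leftLm_neq_rightLm //; lia.
  move=> w; rewrite !inE => /or3P [] /eqP ->;
    rewrite mem_filter ?leftLm_Wset ?rightLm_Wset ?andbT /= ?mz_None /=; try lia.
  + by rewrite yL_neutral.
  + by rewrite yL_neutral.
  + by rewrite yR_neutral.
Qed.

Lemma size_Wia2_odd y : Wia 2 y != [::] -> 3 <= size (Wia 2 y).
Proof.
case/Wia_witness => c hc /= y_c.
have [-> | [] ] : y = n2 \/ 0 < y <= f \/ f < y <= 2 * f.
- have := yL_odd_range c; have := yR_odd_range c.
  by case: y_c => <-; first case: ifP => _; lia.
- exact: size_Wia2_odd_top.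
- exact: size_Wia2_odd_low.
- exact: size_Wia2_odd_high.
Qed.

Lemma q_ell_n1_le_f : 3 < n1 -> kcount <= 1 -> q <= f /\ ell n1 <= f.
Proof.
move=> n1_ge4 k_le1; have r_lt := r_lt_n1 n3 n1_gt0.
have q_le_f : q <= f.
  rewrite leqNgt; apply/negP => f_lt_q; move: k_le1.
  have -> : kcount = n1.
    rewrite /Defs.kcount -[RHS](size_iota 1); apply/eqP; rewrite -all_count.
    by apply/allP => i _; have := ell_bounds n1 n3 i; lia.
  lia.
have r_le1 : q = f -> r <= 1.
  move=> q_f; rewrite leqNgt; apply/negP => r_gt1.
  have ell_big i : i \in [:: 1; 3] -> f < ell i.
    by rewrite !inE => /pred2P [] ->; rewrite /Defs.ell /=; repeat case: ifP => ?; lia.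
  have : size [:: 1; 3] <= kcount.
    rewrite /Defs.kcount -size_filter; apply: uniq_leq_size => // i i13.
    by rewrite mem_filter ell_big // mem_iota; move: i13; rewrite !inE => /pred2P [] ->; lia.
  by move=> /=; lia.
split => //; have := ell_bounds n1 n3 n1; case: (ltnP q f) => [q_lt_f | f_le_q] ell_n1.
- by lia.
- by have := r_le1 (ltac:(lia)); rewrite /Defs.ell; repeat case: ifP => ?; lia.
Qed.

Lemma block_2f2_middle : 3 < n1 -> kcount <= 1 -> 3 <= block (2 * f + 2) < n1.
Proof.
move=> n1_ge4 k_le1; have [q_le_f ell_n1] := q_ell_n1_le_f n1_ge4 k_le1.
have n2E := n2_oddE; have r_lt := r_lt_n1 n3 n1_gt0.
have L3 : Lsum 3 <= 2 * f + 1.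
  have ell2 : ell 2 = q by rewrite /Defs.ell /=; repeat case: ifP => ?; lia.
  rewrite (LsumS n1 n3 (isT : 0 < 2)) (LsumS n1 n3 (isT : 0 < 1)) Lsum_small // ell2.
  by have := ell_bounds n1 n3 1; lia.
have Ln1 : 2 * f + 2 <= Lsum n1.
  by have := Lsum_total n1_gt0 n1_le_n3; rewrite LsumS; lia.
have hz : 0 < 2 * f + 2 <= n3 by lia.
have [/andP [b_gt0 b_le] /andP [lt_z le_z]] := block_spec n1_gt0 n1_le_n3 hz.
set b := block (2 * f + 2) in b_gt0 b_le lt_z le_z *; apply/andP; split.
- rewrite leqNgt; apply/negP => b_lt3.
  by have := Lsum_mono n1 n3 (ltac:(lia) : b.+1 <= 3); rewrite LsumS; lia.
- by rewrite ltn_neqAle b_le andbT; apply/eqP => b_n1; rewrite b_n1 in lt_z; lia.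
Qed.

Lemma rankL_2f2 : kcount <= 1 -> rankL (2 * f + 2) = 2 * f + 1.
Proof.
move=> k_le1; rewrite /Defs.rankL (eq_count (a2 := predC1 1)) => [|c]; last first.
  by rewrite /= inS_small.
rewrite addn2 /= (eq_in_count (a2 := predT)) ?count_predT ?size_iota ?addn1 // => c.
by rewrite mem_iota /=; lia.
Qed.

Lemma validChoice_witness : 2 * n3 <= n1 * n2 -> kcount <= 1 ->
  validChoice n1 n2 n3 (2 * f + 2).
Proof.
move=> two_n3 k_le1; have n2E := n2_oddE.
have n1_ge4 : 3 < n1.
  (* for [n1 = 3] the hypotheses would force [2 * n3 = 3 * n2], which is odd *)
  have [n1_3 | //] : n1 = 3 \/ 3 < n1 by lia.
  by move: two_n3; rewrite n1_3; lia.
have /andP [b_ge3 b_lt] := block_2f2_middle n1_ge4 k_le1.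
split; first by lia.
- by rewrite !inE; apply/negP => /or3P [] /eqP; lia.
- rewrite /Defs.yL n2_odd /= inS_small // rankL_2f2 // addn2 /=.
  by rewrite (_ : 2 * f + 1 - 1 = 2 * f) ?modnMl //; lia.
Qed.

End OddN2.

End Landmarks.

Theorem mainTheorem6 (n1 n2 n3 : nat) :
  3 <= n1 -> 3 <= n2 -> n1 <= n3 -> n2 <= n3 ->
  3 * maxn n1 n2 <= 2 * n3 -> 2 * n3 <= n1 * n2 ->
  (forall c, 1 <= c <= n3 ->
     1 <= block n1 n3 c <= n1 /\
     Lsum n1 n3 (block n1 n3 c) < c <= Lsum n1 n3 (block n1 n3 c) + ell n1 n3 (block n1 n3 c)) /\
  (odd n2 -> kcount n1 n2 n3 <= 1 -> exists z, validChoice n1 n2 n3 z) /\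
  (forall mz, validMod n1 n2 n3 mz ->
     (forall w, w \in Wset n1 n2 n3 mz -> is_vertex n1 n2 n3 w) /\
     (forall a, Wia n1 n2 n3 mz 3 a != [::] -> size (Wia n1 n2 n3 mz 3 a) = 2) /\
     (forall i a, i \in [:: 1; 2] -> Wia n1 n2 n3 mz i a != [::] ->
        3 <= size (Wia n1 n2 n3 mz i a))).
Proof.
move=> n1_ge3 n2_ge3 n1_le_n3 _ three_max two_n3.
have three_n1 : 3 * n1 <= 2 * n3 by lia.
have three_n2 : 3 * n2 <= 2 * n3 by lia.
split; first exact: block_spec (ltnW (ltnW n1_ge3)) n1_le_n3.
split; first by move=> n2_odd k_le1; exists (2 * f n2 + 2); exact: validChoice_witness.
move=> mz mz_valid; split; [exact: Wset_vertex | split; first exact: size_Wia3].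
move=> i a; rewrite !inE => /orP [] /eqP ->; first exact: size_Wia1.
by case: (boolP (odd n2)) => [n2_odd | n2_even]; [exact: size_Wia2_odd | exact: size_Wia2_even].
Qed.
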